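(* Let $n,m\geq 3$ be integers such that at least one of $n,m$ is even. Then $K_n\times K_m$ is type I, i.e. $\chi''(K_n\times K_m)=(n-1)(m-1)+1$.
   Context: All graphs are finite and simple. $K_n$ is the complete graph on $n$ vertices. A total colouring of a graph $G$ is an assignment of colours to the vertices and edges of $G$ such that any two adjacent vertices, any two edges sharing an endpoint, and any edge and each of its endpoints receive different colours. The total chromatic number $\chi''(G)$ is the minimum number of colours in a total colouring of $G$. A graph $G$ with maximum degree $\Delta(G)$ is called type I if $\chi''(G)=\Delta(G)+1$. The direct product $G\times H$ has vertex set $V(G)\times V(H)$, with $(u,v)$ adjacent to $(u',v')$ if and only if $uu'\in E(G)$ and $vv'\in E(H)$; $K_n\times K_m$ is $(n-1)(m-1)$-regular. *)

From mathcomp Require Import all_boot.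
Set Implicit Arguments. Unset Strict Implicit. Unset Printing Implicit Defensive.

Definition simple_graph (T : finType) (e : rel T) : Prop :=
  (forall x y, e x y = e y x) /\ (forall x, e x x = false).

Definition complete_rel (n : nat) : rel 'I_n := fun i j => i != j.

Definition direct_rel (T U : finType) (eG : rel T) (eH : rel U) : rel (T * U) :=
  fun x y => eG x.1 y.1 && eH x.2 y.2.

Definition KxK (n m : nat) : rel ('I_n * 'I_m) :=
  direct_rel (@complete_rel n) (@complete_rel m).
Arguments KxK n m : clear implicits.

(* A total colouring with colours 'I_k: a vertex colouring cv and an edge
   colouring ce, where the edge {x,y} gets colour ce x y = ce y x. *)
Definition is_total_colouring (T : finType) (e : rel T) (k : nat)
    (cv : T -> 'I_k) (ce : T -> T -> 'I_k) : Prop :=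
  [/\ (forall x y, e x y -> ce x y = ce y x),
      (forall x y, e x y -> cv x != cv y),
      (forall x y z, e x y -> e x z -> y != z -> ce x y != ce x z)
    & (forall x y, e x y -> ce x y != cv x)].

Definition total_colourable (T : finType) (e : rel T) (k : nat) : Prop :=
  exists (cv : T -> 'I_k) (ce : T -> T -> 'I_k), is_total_colouring e cv ce.

Definition is_total_chromatic_number (T : finType) (e : rel T) (k : nat) : Prop :=
  total_colourable e k /\ (forall j, total_colourable e j -> k <= j).

From mathcomp Require Import all_boot all_algebra zify.
Set Implicit Arguments. Unset Strict Implicit. Unset Printing Implicit Defensive.
Import GRing.Theory.

(* Each vertex of K_n x K_m has degree (n-1)(m-1) and its colour must avoid those of its edges,
   which gives the lower bound. For the upper bound let n be even and fix a 1-factorisation of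
   K_n with n-1 classes, one of them distinguished. An edge (i,a)(j,b), written with i < j,
   whose projection ij lies in an ordinary class c gets the colour (c, b - a mod m): (n-2)(m-1)
   colours. Over the distinguished perfect matching the edges get L(a,b) and the vertices
   (i,a) get L(a,a), for a Latin square L of order m whose diagonal is a transversal; these are
   m more colours. Such squares exist for all m <> 2: a + b for m odd, and for m even the
   prolongation of the cyclic square of order m-1 along its transversal (x, x+1). *)

Lemma total_colourable_of_finType (T D : finType) (e : rel T) (k : nat)
    (cv : T -> D) (ce : T -> T -> D) :
  (forall x y, e x y -> ce x y = ce y x) ->
  (forall x y, e x y -> cv x != cv y) ->
  (forall x y z, e x y -> e x z -> y != z -> ce x y != ce x z) ->
  (forall x y, e x y -> ce x y != cv x) ->
  #|D| <= k -> total_colourable e k.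
Proof.
move=> ce_sym cv_adj ce_adj ce_cv leDk.
pose f (d : D) := widen_ord leDk (enum_rank d).
have f_inj : injective f by move=> d d' [/ord_inj/enum_rank_inj].
exists (f \o cv), (fun x y => f (ce x y)); split=> [x y /ce_sym -> //|x y|x y z|x y].
- by rewrite /= (inj_eq f_inj); apply: cv_adj.
- by rewrite (inj_eq f_inj); apply: ce_adj.
- by rewrite /= (inj_eq f_inj); apply: ce_cv.
Qed.

Lemma total_colourable_neighbours_lt (T : finType) (e : rel T) (k : nat) (x : T) :
  total_colourable e k -> #|[set y | e x y]| < k.
Proof.
move=> [cv [ce [_ _ ce_adj ce_cv]]].
set N := [set y | e x y].
have ce_inj : {in N &, injective (ce x)}.
  move=> y z; rewrite !inE => exy exz eq_ce; apply/eqP; apply: contraT => ne_yz.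
  by have := ce_adj x y z exy exz ne_yz; rewrite eq_ce eqxx.
have cv_new : cv x \notin [set ce x y | y in N].
  by apply/imsetP=> -[y]; rewrite inE => /ce_cv /eqP; congruence.
have := max_card (mem (cv x |: [set ce x y | y in N])).
by rewrite cardsU1 cv_new card_in_imset // card_ord.
Qed.

Lemma total_colourable_embed (T U : finType) (e : rel T) (e' : rel U) (f : U -> T) k :
  injective f -> (forall x y, e' x y -> e (f x) (f y)) ->
  total_colourable e k -> total_colourable e' k.
Proof.
move=> f_inj f_hom [cv [ce [ce_sym cv_adj ce_adj ce_cv]]].
exists (cv \o f), (fun x y => ce (f x) (f y)); split=> [x y|x y|x y z|x y] /f_hom.
- exact: ce_sym.
- exact: cv_adj.
- by move=> exy /f_hom exz ne_yz; apply: ce_adj; rewrite ?(inj_eq f_inj).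
- exact: ce_cv.
Qed.

Lemma KxKE n m (x y : 'I_n * 'I_m) : KxK n m x y = (x.1 != y.1) && (x.2 != y.2).
Proof. by []. Qed.

Lemma card_KxK_neighbours n m (x : 'I_n * 'I_m) :
  #|[set y | KxK n m x y]| = (n - 1) * (m - 1).
Proof.
have -> : [set y | KxK n m x y] = setX [set~ x.1] [set~ x.2].
  by apply/setP=> y; rewrite !inE KxKE eq_sym (eq_sym y.2).
by rewrite cardsX !cardsC1 !card_ord !subn1.
Qed.

Lemma KxK_total_colourable_gt n m k : 0 < n -> 0 < m ->
  total_colourable (KxK n m) k -> (n - 1) * (m - 1) < k.
Proof.
move=> n_gt0 m_gt0 /(total_colourable_neighbours_lt (Ordinal n_gt0, Ordinal m_gt0)).
by rewrite card_KxK_neighbours.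
Qed.

Lemma total_colourable_KxK_swap n m k :
  total_colourable (KxK n m) k -> total_colourable (KxK m n) k.
Proof.
apply: (total_colourable_embed (f := fun x => (x.2, x.1))) => [[? ?] [? ?] [-> ->] //|x y].
by rewrite !KxKE andbC.
Qed.

Local Open Scope ring_scope.

Lemma unliftK n (h : 'I_n) : cancel (unlift h) (oapp (lift h) h).
Proof. by move=> i; case: unliftP. Qed.

Lemma oapp_liftK n (h : 'I_n) : cancel (oapp (lift h) h) (unlift h).
Proof. by case=> [i|] /=; rewrite ?liftK ?unlift_none. Qed.

Lemma Zp_double_inj p : odd p.+1 -> injective (fun x : 'I_p.+1 => x + x).
Proof.
move=> odd_p; apply: (can_inj (g := fun x => x *+ (p.+2)./2)) => x.
have x_p : x *+ p.+1 = 0 by apply: val_inj; rewrite Zp_mulrn /= modnMl.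
have half_p : (2 * p.+2./2)%N = p.+2 by rewrite mul2n even_halfK //= negbK.
by rewrite -mulr2n -mulrnA half_p mulrS x_p addr0.
Qed.

Definition Kn_edge_colouring (T : eqType) (C : Type) (F : T -> T -> C) : Prop :=
  (forall i j, F i j = F j i) /\
  (forall i j j', j != i -> j' != i -> F i j = F i j' -> j = j').

Lemma Kn_edge_colouring_comp (T U : eqType) (C D : Type) (F : T -> T -> C)
    (f : U -> T) (g : C -> D) :
  injective f -> injective g -> Kn_edge_colouring F ->
  Kn_edge_colouring (fun i j => g (F (f i) (f j))).
Proof.
move=> f_inj g_inj [F_sym F_inj]; split=> [i j|i j j']; first by rewrite F_sym.
rewrite -!(inj_eq f_inj) => ne_ji ne_j'i /g_inj /(F_inj _ _ _ ne_ji ne_j'i).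
exact: f_inj.
Qed.

(* The classical 1-factorisation of K_(p+2): on the first p+1 vertices edge ij gets colour i+j
   mod p+1, and the extra vertex joins i with colour 2i, the colour missing at i. *)
Definition round_robin p (x y : option 'I_p.+1) : 'I_p.+1 :=
  match x, y with
  | Some x, Some y => x + y
  | Some x, None | None, Some x => x + x
  | None, None => 0
  end.

Lemma round_robin_edge_colouring p : odd p.+1 -> Kn_edge_colouring (@round_robin p).
Proof.
move=> odd_p; split=> [[i|] [j|] //=|]; first exact: addrC.
have double_inj := Zp_double_inj odd_p.
case=> [i|] [j|] [j'|] //= ne_ji ne_j'i; first [ by move/addrI->
  | by move/double_inj->
  | by move/addrI=> eq_ji; rewrite eq_ji eqxx in ne_ji
  | by move/esym/addrI=> eq_j'i; rewrite eq_j'i eqxx in ne_j'i ].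
Qed.

Lemma Kn_edge_colouring_exists n : ~~ odd n ->
  exists F : 'I_n -> 'I_n -> 'I_n.-1, Kn_edge_colouring F.
Proof.
case: n => [|[|p]] // even_n; first by exists (fun i _ => i); split=> [[]|[]].
exists (fun i j => round_robin (unlift ord_max i) (unlift ord_max j)).
apply: (Kn_edge_colouring_comp (g := id)) => //; first exact: can_inj (unliftK _).
by apply: round_robin_edge_colouring; rewrite oddS negbK in even_n.
Qed.

Definition latin_transversal_diag (T S : eqType) (L : T -> T -> S) : Prop :=
  [/\ forall a, injective (L a), forall b, injective (L^~ b) & injective (fun a => L a a)].

Lemma latin_transversal_diag_comp (T U S R : eqType) (L : T -> T -> S)
    (f : U -> T) (g : S -> R) :
  injective f -> injective g -> latin_transversal_diag L ->
  latin_transversal_diag (fun a b => g (L (f a) (f b))).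
Proof.
move=> f_inj g_inj [L_row L_col L_diag].
by split=> [a|b|] ? ? /g_inj; [move/L_row | move/L_col | move/L_diag] => /f_inj.
Qed.

Lemma addr_latin_transversal_diag p : odd p.+1 ->
  latin_transversal_diag (fun a b : 'I_p.+1 => a + b).
Proof. by move=> odd_p; split=> [a|b|]; [apply: addrI | apply: addIr | apply: Zp_double_inj]. Qed.

(* Prolongation: the cells (x, s x) of the transversal move their symbols into the new row and
   column, and are refilled with the new symbol. *)
Definition prolong (T S : eqType) (L : T -> T -> S) (s s' : T -> T) (x y : option T) :
    option S :=
  match x, y with
  | Some x, Some y => if y == s x then None else Some (L x y)
  | Some x, None => Some (L x (s x))
  | None, Some y => Some (L (s' y) y)
  | None, None => None
  end.

Section Prolongation.
Variables (T S : eqType) (L : T -> T -> S) (s s' : T -> T).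
Hypotheses (sK : cancel s s') (s'K : cancel s' s) (s_fixfree : forall x, s x != x).
Hypotheses (L_transversal : injective (fun x => L x (s x))) (L_latin : latin_transversal_diag L).

Lemma prolong_latin_transversal_diag : latin_transversal_diag (prolong L s s').
Proof.
have [L_row L_col L_diag] := L_latin.
have s_inj := can_inj sK; have s'_inj := can_inj s'K.
have L_s' y : L (s' y) y = L (s' y) (s (s' y)) by rewrite s'K.
split.
- case=> [x|] [y|] [y'|] //=; do ?case: eqP => //.
  + by move=> -> ->.
  + by move=> _ _ [/L_row ->].
  + by move=> ne_y [/L_row /ne_y].
  + by move=> ne_y' [/L_row /esym /ne_y'].
  + by rewrite !L_s' => -[/L_transversal /s'_inj ->].
- case=> [y|] [x|] [x'|] //=; do ?case: eqP => //.
  + by move=> -> /s_inj ->.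
  + by move=> _ _ [/L_col ->].
  + by move=> ne_y [/L_col x_s'y]; case: ne_y; rewrite x_s'y s'K.
  + by move=> ne_y [/esym /L_col x'_s'y]; case: ne_y; rewrite x'_s'y s'K.
  + by move=> [/L_transversal ->].
- have diag x : prolong L s s' (Some x) (Some x) = Some (L x x).
    by rewrite /= eq_sym (negPf (s_fixfree x)).
  by case=> [x|] [x'|] //; rewrite ?diag // => -[/L_diag ->].
Qed.
End Prolongation.

Lemma latin_transversal_diag_exists m : m != 2%N ->
  exists L : 'I_m -> 'I_m -> 'I_m, latin_transversal_diag L.
Proof.
case: m => [|p] m_neq2; first by exists (fun a _ => a); split=> [[]|[]|[]].
case odd_m: (odd p.+1); first by exists (fun a b => a + b); apply: addr_latin_transversal_diag.
case: p m_neq2 odd_m => [|[|r]] // _; rewrite oddS => /negbFE odd_r.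
pose s (x : 'I_r.+2) := x + 1.
have s_fixfree x : s x != x by rewrite /s -{2}(addr0 x) (inj_eq (addrI x)) oner_eq0.
have L_transversal : injective (fun x => x + s x).
  by move=> x y; rewrite /s !addrA => /addIr /(Zp_double_inj odd_r).
exists (fun a b => oapp (lift ord_max) ord_max
  (prolong (fun x y => x + y) s (fun y => y - 1) (unlift ord_max a) (unlift ord_max b))).
apply: latin_transversal_diag_comp; [exact: can_inj (unliftK _)|exact: can_inj (oapp_liftK _)|].
apply: prolong_latin_transversal_diag => //; [exact: addrK | exact: subrK |].
exact: addr_latin_transversal_diag.
Qed.

Section ProductColouring.
Variables (n m : nat) (C S : finType).
Variables (F : 'I_n -> 'I_n -> option C) (L : 'I_m.+2 -> 'I_m.+2 -> S).
Hypotheses (F_colouring : Kn_edge_colouring F) (L_latin : latin_transversal_diag L).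

Local Notation V := ('I_n * 'I_m.+2)%type.
Local Notation nonzero := {d : 'I_m.+2 | d != 0}.
Local Notation colour := (S + C * nonzero)%type.

Definition orient (x y : V) := if (x.1 < y.1)%N then (x.2, y.2) else (y.2, x.2).

(* [insubd] needs a default, which is never used: the two ends of an edge differ. *)
Let one_nonzero : nonzero := exist _ 1 (oner_neq0 _).

Definition pair_colour (f : option C) (ab : 'I_m.+2 * 'I_m.+2) : colour :=
  if f is Some c then inr (c, insubd one_nonzero (ab.2 - ab.1)) else inl (L ab.1 ab.2).

Definition prod_edge_colour (x y : V) := pair_colour (F x.1 y.1) (orient x y).
Definition prod_vertex_colour (x : V) : colour := inl (L x.2 x.2).

Lemma orient_sym x y : x.1 != y.1 -> orient x y = orient y x.
Proof.
by move=> ne_xy; rewrite /orient; case: ltngtP => // /val_inj/eqP; rewrite (negPf ne_xy).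
Qed.

Lemma pair_colour_class f f' p p' : pair_colour f p = pair_colour f' p' -> f = f'.
Proof. by case: f f' => [c|] [c'|] //= [->]. Qed.

Lemma pair_colour_neighbour_inj x j f :
  {in [pred b | b != x.2] &, injective (fun b => pair_colour f (orient x (j, b)))}.
Proof.
have [L_row L_col _] := L_latin.
move=> b b'; rewrite !inE /orient /= => ne_b ne_b'.
have val_diff c d : c != d -> val (insubd one_nonzero (c - d)) = (c - d).
  by move=> ne_cd; rewrite insubdK // unfold_in subr_eq0.
case: ltnP => _; case: f => [c|] /= [].
- by move/(congr1 val); rewrite !val_diff // => /addIr.
- exact: L_row.
- by move/(congr1 val); rewrite !val_diff 1?eq_sym // => /addrI /oppr_inj.
- exact: L_col.
Qed.

Lemma pair_colour_neq_vertex x j b f :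
  b != x.2 -> pair_colour f (orient x (j, b)) != prod_vertex_colour x.
Proof.
have [L_row L_col _] := L_latin.
move=> ne_b; rewrite /orient /prod_vertex_colour; case: f => [c|] //=.
by case: ltnP => _; apply: contra ne_b => /eqP []; [move/L_row->|move/L_col->].
Qed.

Lemma KxK_total_colourable_prod : total_colourable (KxK n m.+2) (#|S| + #|C| * m.+1)%N.
Proof.
have [F_sym F_inj] := F_colouring; have [_ _ L_diag] := L_latin.
apply: (total_colourable_of_finType (cv := prod_vertex_colour) (ce := prod_edge_colour)).
- by move=> x y /andP [ne_xy _]; rewrite /prod_edge_colour F_sym orient_sym.
- by move=> x y /andP [_]; apply: contra => /eqP [/L_diag ->].
- move=> [i a] [j b] [j' b'] /andP [/= ne_ij ne_ab] /andP [/= ne_ij' ne_ab'] ne_yz.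
  apply: contra ne_yz => /eqP eq_ce.
  have eq_j : j = j' by apply: F_inj (pair_colour_class eq_ce); rewrite eq_sym.
  move: eq_ce; rewrite -eq_j => /pair_colour_neighbour_inj eq_b.
  by rewrite eq_b // inE eq_sym.
- by move=> [i a] [j b] /andP [_ /= ne_ab]; apply: pair_colour_neq_vertex; rewrite eq_sym.
- by rewrite card_sum card_prod card_sig cardC1 card_ord.
Qed.

End ProductColouring.

Local Close Scope ring_scope.

Lemma KxK_total_colourable_even n m : ~~ odd n -> 0 < n -> 2 < m ->
  total_colourable (KxK n m) ((n - 1) * (m - 1) + 1).
Proof.
move=> even_n n_gt0 m_gt2.
have [F F_colouring] := Kn_edge_colouring_exists even_n.
have [L L_latin] := @latin_transversal_diag_exists m (negbT (gtn_eqF m_gt2)).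
case: n n_gt0 even_n F F_colouring => [|[|k]] // _ _ F F_colouring.
case: m m_gt2 L L_latin => [|[|m]] // _ L L_latin.
have F'_colouring : Kn_edge_colouring (fun i j => unlift ord0 (F i j)).
  by apply: (Kn_edge_colouring_comp (f := id)) => //; exact: can_inj (unliftK _).
have := KxK_total_colourable_prod F'_colouring L_latin; rewrite !card_ord.
by have -> : ((k.+2 - 1) * (m.+2 - 1) + 1 = m.+2 + k * m.+1)%N by lia.
Qed.

Theorem theorem3 (n m : nat) (hn : 3 <= n) (hm : 3 <= m)
    (heven : ~~ odd n || ~~ odd m) :
  is_total_chromatic_number (KxK n m) ((n - 1) * (m - 1) + 1).
Proof.
split; last by move=> j col; rewrite addn1; apply: (KxK_total_colourable_gt _ _ col); lia.
case/orP: heven => [even_n|even_m]; first by apply: KxK_total_colourable_even => //; lia.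
apply: total_colourable_KxK_swap; rewrite mulnC.
by apply: KxK_total_colourable_even => //; lia.
Qed.
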